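(* Assume hypotheses (A1)–(A4) below and fix $\sigma\in(0,\infty]$. Then the functionals $\mathcal E_{\sigma,h}$ (restricted to $\mathcal T_\sigma$) $\Gamma$-converge as $h\to0$ in the strong topology of $\mathcal T_\sigma$ to $\overline{\mathcal E}_\sigma$.
   Context: Let $\{\mathcal T_\sigma\}_{\sigma\in\mathbb R\cup\{\pm\infty\}}$ be reflexive Banach spaces with norms $\|\cdot\|_{\mathcal T_\sigma}$, $\mathcal T_{-\sigma}:=\mathcal T_\sigma^*$, and $\mathcal T_\sigma\subset\mathcal T_0$ for $\sigma\in(0,\infty]$. Limits ''as $\sigma\to\infty$'' refer to arbitrary sequences $\sigma_n\to\infty$. (A1) (i) There is $M_1>0$ independent of $\sigma$ with $M_1\|u\|_{\mathcal T_0}\le\|u\|_{\mathcal T_\sigma}$ for all $\sigma\in(0,\infty]$, $u\in\mathcal T_\sigma$. (ii) If $v_\sigma\in\mathcal T_\sigma$ with $\|v_\sigma\|_{\mathcal T_\sigma}\le C$ ($C$ independent of $\sigma$), then $\{v_\sigma\}$ is relatively compact in $\mathcal T_0$ as $\sigma\to\infty$ and each limit point lies in $\mathcal T_\infty$. (A2) For each $\sigma\in(0,\infty]$, $\mathcal E_\sigma:\mathcal T_\sigma\to[0,\infty)$ is weakly lower semicontinuous on $\mathcal T_\sigma$, and: (i) there is $\varphi\in C^0([0,\infty)^2)$ with $|\mathcal E_\sigma(u)-\mathcal E_\sigma(v)|\le\varphi(\|u\|_{\mathcal T_\sigma},\|v\|_{\mathcal T_\sigma})\|u-v\|_{\mathcal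 T_\sigma}$ for all $u,v\in\mathcal T_\sigma$; (ii) there exist $p\in(1,\infty)$, $\alpha>0$, $\psi\in C^0([0,\infty))$ with $\psi(t)/t^p\to0$ as $t\to\infty$, independent of $\sigma$, with $\alpha\|u\|^p_{\mathcal T_\sigma}\le\mathcal E_\sigma(u)+\psi(\|u\|_{\mathcal T_\sigma})$. (A3) With $\overline{\mathcal E}_\sigma:\mathcal T_0\to[0,\infty]$ equal to $\mathcal E_\sigma$ on $\mathcal T_\sigma$ and $+\infty$ on $\mathcal T_0\setminus\mathcal T_\sigma$ ($\sigma\in(0,\infty]$), $\overline{\mathcal E}_\sigma$ $\Gamma$-converges to $\overline{\mathcal E}_\infty$ as $\sigma\to\infty$ in the strong topology of $\mathcal T_0$. (A4) For $\sigma\in(0,\infty]$, $h\in(0,h_0]$, $W_{\sigma,h}\subset\mathcal T_\sigma$ are finite-dimensional subspaces such that for each $h$ the span of $\bigcup_{\sigma\in(0,\infty]}W_{\sigma,h}$ is finite-dimensional, and: (i) for every $\sigma\in(0,\infty]$ and $u\in\mathcal T_\sigma$ there exist $h_n\to0$ and $u_n\in W_{\sigma,h_n}$ with $\|u-u_n\|_{\mathcal T_\sigma}\to0$; (ii) for each $h\in(0,h_0]$, $W_{\infty,h}=\mathcal T_\infty\cap\bigcup_{\sigma\in(0,\infty]}W_{\sigma,h}$; (iii) with $W_{\infty,0}:=\mathcal T_\infty$: for every $h\in[0,h_0]$, every $v\in W_{\infty,h}$ and every sequence $(\sigma_n,h_n)$ with $\sigma_n\to\infty$, $h_n\in(0,h_0]$,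 and $h_n=h$ for all $n$ if $h>0$, $h_n\to0$ if $h=0$, there exist $v_{\sigma_n}\in\mathcal T_{\sigma_n}$ with $\|v_{\sigma_n}-v\|_{\mathcal T_0}\to0$ and $\mathcal E_{\sigma_n}(v_{\sigma_n})\to\mathcal E_\infty(v)$, and $v_n\in W_{\sigma_n,h_n}$ with $\|v_n-v_{\sigma_n}\|_{\mathcal T_{\sigma_n}}\to0$. Define $\mathcal E_{\sigma,h}:\mathcal T_0\to[0,\infty]$ by $\mathcal E_{\sigma,h}=\mathcal E_\sigma$ on $W_{\sigma,h}$ and $+\infty$ on $\mathcal T_0\setminus W_{\sigma,h}$. $\Gamma$-convergence of $I_s:X\to\overline{\mathbb R}$ to $I$ (in a topology on $X$) means: (1) $I(v)\le\liminf I_s(v_s)$ whenever $v_s\to v$; (2) for each $v$ there is $v_s\to v$ with $\limsup I_s(v_s)\le I(v)$. *)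

From HB Require Import structures.
From mathcomp Require Import all_boot all_order all_algebra.
From mathcomp Require Import all_classical all_reals all_analysis.
Set Implicit Arguments. Unset Strict Implicit. Unset Printing Implicit Defensive.
Import Order.TTheory GRing.Theory Num.Theory.
Import numFieldNormedType.Exports.
Local Open Scope classical_set_scope.
Local Open Scope ring_scope.

Section Defs.
Variables (R : realType) (V : lmodType R).

Definition normed_subspace (S : set V) (N : V -> R) : Prop :=
  [/\ S 0,
      (forall x y, S x -> S y -> S (x + y)),
      (forall (a : R) x, S x -> S (a *: x)) &
    [/\ (forall x, S x -> 0 <= N x /\ (N x = 0 <-> x = 0)),
      (forall (a : R) x, S x -> N (a *: x) = `|a| * N x)
    & (forall x y, S x -> S y -> N (x + y) <= N x + N y)]].

Definition ncvg (N : V -> R) (u : nat -> V) (v : V) : Prop :=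
  (fun n => N (u n - v)) @ \oo --> (0 : R).

Definition complete_on (S : set V) (N : V -> R) : Prop :=
  forall u : nat -> V, (forall n, S (u n)) ->
    (forall e : R, 0 < e -> exists M, forall m n, (M <= m)%N -> (M <= n)%N ->
       N (u m - u n) < e) ->
    exists2 v, S v & ncvg N u v.

Definition bdd_functional (S : set V) (N : V -> R) (f : V -> R) : Prop :=
  [/\ (forall x y, S x -> S y -> f (x + y) = f x + f y),
      (forall (a : R) x, S x -> f (a *: x) = a * f x)
    & exists C : R, forall x, S x -> `|f x| <= C * N x].

Definition dual_norm (S : set V) (N : V -> R) (f : V -> R) : R :=
  sup [set `|f x| | x in [set x | S x /\ N x <= 1]].

Definition bidual_elt (S : set V) (N : V -> R) (Phi : (V -> R) -> R) : Prop :=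
  [/\ (forall f g, bdd_functional S N f -> bdd_functional S N g ->
         Phi (f \+ g) = Phi f + Phi g),
      (forall (a : R) f, bdd_functional S N f -> Phi (fun x => a * f x) = a * Phi f)
    & exists C : R, forall f, bdd_functional S N f ->
         `|Phi f| <= C * dual_norm S N f].

Definition reflexive_on (S : set V) (N : V -> R) : Prop :=
  forall Phi, bidual_elt S N Phi ->
    exists2 x, S x & forall f, bdd_functional S N f -> Phi f = f x.

Definition reflexive_Banach (S : set V) (N : V -> R) : Prop :=
  [/\ normed_subspace S N, complete_on S N & reflexive_on S N].

(* weak lower semicontinuity on (S, N): every sublevel set is closed for the
   weak topology sigma(S, S^* ) *)
Definition weakly_lsc (S : set V) (N : V -> R) (E : V -> R) : Prop :=
  forall (c : R) x, S x -> c < E x ->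
    exists (fs : seq (V -> R)) (e : R),
      [/\ 0 < e, (forall f, f \in fs -> bdd_functional S N f)
        & forall y, S y -> (forall f, f \in fs -> `|f y - f x| < e) -> c < E y].

Definition ext_inf (S : set V) (E : V -> R) (u : V) : \bar R :=
  if `[< S u >] then (E u)%:E else +oo%E.

Definition Gamma_liminf (S : set V) (N : V -> R) (F : nat -> V -> \bar R)
  (I : V -> \bar R) : Prop :=
  forall (u : nat -> V) v, (forall n, S (u n)) -> S v -> ncvg N u v ->
     (I v <= limn_einf (fun n => F n (u n)))%E.

Definition Gamma_recovery (S : set V) (N : V -> R) (F : nat -> V -> \bar R)
  (I : V -> \bar R) (v : V) : Prop :=
  exists u : nat -> V,
     [/\ (forall n, S (u n)), ncvg N u v &
         (limn_esup (fun n => F n (u n)) <= I v)%E].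

Definition Gamma_cvg (S : set V) (N : V -> R) (F : nat -> V -> \bar R)
  (I : V -> \bar R) : Prop :=
  Gamma_liminf S N F I /\ (forall v, S v -> Gamma_recovery S N F I v).

Definition span_seq (bs : seq V) : set V :=
  [set v | exists c : nat -> R, v = \sum_(i < size bs) c i *: bs`_i].

Definition fin_dim_subspace (W : set V) : Prop :=
  [/\ W 0, (forall x y, W x -> W y -> W (x + y)),
      (forall (a : R) x, W x -> W (a *: x))
    & exists bs : seq V, W `<=` span_seq bs].

End Defs.

From HB Require Import structures.
From mathcomp Require Import all_boot all_order all_algebra.
From mathcomp Require Import all_classical all_reals all_analysis.
Import Order.TTheory GRing.Theory Num.Theory.
Import numFieldNormedType.Exports.
Set Implicit Arguments. Unset Strict Implicit. Unset Printing Implicit Defensive.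
Local Open Scope classical_set_scope.
Local Open Scope ring_scope.

(* The local Lipschitz bound (A2)(i) makes E_sigma continuous for the strong
   topology of T_sigma.  Since E_{sigma,h} >= E_sigma pointwise, the liminf
   inequality then holds for any family of subspaces, and the density (A4)(i)
   of the W_{sigma,h} supplies recovery sequences along which E_sigma
   converges. *)

Lemma cvg_dist_dominated (R : realType) (f g : nat -> R) (l : R) :
  g @ \oo --> 0 -> (forall n, `|l - f n| <= g n) -> f @ \oo --> l.
Proof.
move=> /cvgrPdist_le g0 fg; apply/cvgrPdist_le => e e0.
apply: filterS (g0 e e0) => n /=; rewrite sub0r normrN => gn.
exact: le_trans (fg n) (le_trans (ler_norm _) gn).
Qed.

Lemma cvg_comp_within {T U : topologicalType} (A : set T) (g : T -> U)
    (x : nat -> T) (a : T) :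
  {within A, continuous g} -> (forall n, A (x n)) -> A a ->
  x @ \oo --> a -> g \o x @ \oo --> g a.
Proof.
move=> /subspace_continuousP gA Ax Aa xa P Pga.
have near_a : within A (nbhs a) (g @^-1` P) by exact: gA a Aa P Pga.
by apply: (@filterS _ \oo) (xa _ near_a) => n /= /(_ (Ax n)).
Qed.

Lemma le_limn_einf (R : realType) (u w : nat -> \bar R) :
  (forall n, (u n <= w n)%E) -> (limn_einf u <= limn_einf w)%E.
Proof.
move=> uw; rewrite !limn_einf_lim; apply: lee_lim; try exact: is_cvg_einfs.
apply: nearW => n; apply: le_ereal_inf_tmp => _ [k kn <-].
by apply: le_trans (uw k); apply: ereal_inf_lbound; exists k.
Qed.

Section NormedSubspace.
Variables (R : realType) (V : lmodType R) (S : set V) (N : V -> R).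
Hypothesis SN : normed_subspace S N.

Lemma normed_subspaceB x y : S x -> S y -> S (x - y).
Proof.
case: SN => _ SD SZ _ Sx Sy.
by rewrite -scaleN1r; apply: SD => //; apply: SZ.
Qed.

Lemma normed_subspace_ge0 x : S x -> 0 <= N x.
Proof. by case: SN => _ _ _ [N0 _ _] /N0 []. Qed.

Lemma normed_subspace_distC x y : S x -> S y -> N (y - x) = N (x - y).
Proof.
case: SN => _ _ _ [_ NZ _] Sx Sy.
rewrite -opprB -[- _]scaleN1r NZ ?normrN1 ?mul1r //.
exact: normed_subspaceB.
Qed.

Lemma normed_subspace_ler_dist x y : S x -> S y -> `|N x - N y| <= N (x - y).
Proof.
case: SN => _ _ _ [_ _ ND] Sx Sy.
rewrite ler_norml lerNl opprB !lerBlDr.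
have := ND _ _ (normed_subspaceB Sy Sx) Sx; have := ND _ _ (normed_subspaceB Sx Sy) Sy.
by rewrite !subrK (normed_subspace_distC Sx Sy) => -> ->.
Qed.

Lemma ncvg_norm u v : (forall n, S (u n)) -> S v -> ncvg N u v ->
  (fun n => N (u n)) @ \oo --> N v.
Proof.
move=> Su Sv uv; apply: (cvg_dist_dominated uv) => n.
by rewrite distrC normed_subspace_ler_dist.
Qed.

Definition ncontinuous_on (E : V -> R) : Prop :=
  forall u v, (forall n, S (u n)) -> S v -> ncvg N u v ->
    (fun n => E (u n)) @ \oo --> E v.

Lemma local_lipschitz_ncontinuous (E : V -> R) (phi : R -> R -> R) :
  {within [set q : R * R | 0 <= q.1 /\ 0 <= q.2],
    continuous (fun q : R * R => phi q.1 q.2)} ->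
  (forall u v, S u -> S v -> `|E u - E v| <= phi (N u) (N v) * N (u - v)) ->
  ncontinuous_on E.
Proof.
move=> phi_cont lip u v Su Sv uv.
have phi_uv : (fun n => phi (N (u n)) (N v)) @ \oo --> phi (N v) (N v).
  have Nuv : (fun n => (N (u n), N v)) @ \oo --> (N v, N v).
    exact: cvg_pair (ncvg_norm Su Sv uv) (cvg_cst _).
  by apply: (cvg_comp_within phi_cont _ _ Nuv) => [n|]; split;
    exact: normed_subspace_ge0.
apply: (@cvg_dist_dominated _ _ (fun n => phi (N (u n)) (N v) * N (u n - v))).
  by rewrite -(mulr0 (phi (N v) (N v))); apply: cvgM.
by move=> n; rewrite distrC lip.
Qed.

Lemma ext_inf_in (A : set V) (E : V -> R) u : A u -> ext_inf A E u = (E u)%:E.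
Proof. by move=> Au; rewrite /ext_inf asboolT. Qed.

Lemma ext_inf_ge (A : set V) (E : V -> R) u : ((E u)%:E <= ext_inf A E u)%E.
Proof. by rewrite /ext_inf; case: asboolP; rewrite ?leey. Qed.

Lemma ncontinuous_EFin (E : V -> R) u v :
  ncontinuous_on E -> (forall n, S (u n)) -> S v -> ncvg N u v ->
  (fun n => (E (u n))%:E) @ \oo --> (E v)%:E.
Proof. by move=> Econt Su Sv uv; apply: cvg_EFin; [exact: nearW | exact: Econt]. Qed.

Lemma ncontinuous_Gamma_liminf (E : V -> R) (A : nat -> set V) :
  ncontinuous_on E -> Gamma_liminf S N (fun n => ext_inf (A n) E) (ext_inf S E).
Proof.
move=> Econt u v Su Sv uv; rewrite ext_inf_in //.
have Euv := ncontinuous_EFin Econt Su Sv uv.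
by rewrite -(cvg_limn_einf_sup Euv).1; apply: le_limn_einf => n; apply: ext_inf_ge.
Qed.

Lemma ncontinuous_Gamma_recovery (E : V -> R) (A : nat -> set V) u v :
  ncontinuous_on E -> (forall n, A n (u n)) -> (forall n, S (u n)) -> S v ->
  ncvg N u v -> Gamma_recovery S N (fun n => ext_inf (A n) E) (ext_inf S E) v.
Proof.
move=> Econt Au Su Sv uv; exists u; split=> //.
have Euv := ncontinuous_EFin Econt Su Sv uv.
rewrite ext_inf_in // -(cvg_limn_einf_sup Euv).2.
suff -> : (fun n => ext_inf (A n) E (u n)) = (fun n => (E (u n))%:E) by [].
by apply: funext => n; exact: ext_inf_in.
Qed.

End NormedSubspace.

Theorem theorem2p10 (R : realType) (V : lmodType R)
  (T : \bar R -> set V) (N : \bar R -> V -> R)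
  (E : \bar R -> V -> R)
  (W : \bar R -> R -> set V) (h0 : R)
  (* spaces: T_sigma, sigma in [0, +oo], reflexive Banach, T_sigma ⊂ T_0 *)
  (HT : forall s : \bar R, (0 <= s)%E -> reflexive_Banach (T s) (N s))
  (Hsub : forall s : \bar R, (0 < s)%E -> T s `<=` T 0%E)
  (* (A1) *)
  (A1i : exists2 M1 : R, 0 < M1 &
     forall s : \bar R, (0 < s)%E -> forall u, T s u -> M1 * N 0%E u <= N s u)
  (A1ii : forall (sg : nat -> R) (v : nat -> V) (C : R),
     (forall n, 0 < sg n) -> sg @ \oo --> +oo ->
     (forall n, T (sg n)%:E (v n)) -> (forall n, N (sg n)%:E (v n) <= C) ->
     (exists (phi : nat -> nat) (w : V), [/\ {homo phi : m n / (m < n)%N},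
         T 0%E w & ncvg (N 0%E) (v \o phi) w]) /\
     (forall (phi : nat -> nat) (w : V), {homo phi : m n / (m < n)%N} ->
         T 0%E w -> ncvg (N 0%E) (v \o phi) w -> T +oo%E w))
  (* (A2) *)
  (A2nn : forall s : \bar R, (0 < s)%E -> forall u, T s u -> 0 <= E s u)
  (A2w : forall s : \bar R, (0 < s)%E -> weakly_lsc (T s) (N s) (E s))
  (A2i : forall s : \bar R, (0 < s)%E -> exists phi : R -> R -> R,
     {within [set q : R * R | 0 <= q.1 /\ 0 <= q.2],
        continuous (fun q : R * R => phi q.1 q.2)} /\
     forall u v, T s u -> T s v ->
       `|E s u - E s v| <= phi (N s u) (N s v) * N s (u - v))
  (A2ii : exists (p alpha : R) (psi : R -> R),
     [/\ 1 < p, 0 < alpha, {within [set t : R | 0 <= t], continuous psi},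
         (fun t => psi t / t `^ p) @ +oo --> (0 : R)
       & forall s : \bar R, (0 < s)%E -> forall u, T s u ->
           alpha * N s u `^ p <= E s u + psi (N s u)])
  (* (A3) *)
  (A3 : forall sg : nat -> R, (forall n, 0 < sg n) -> sg @ \oo --> +oo ->
     Gamma_cvg (T 0%E) (N 0%E)
       (fun n => ext_inf (T (sg n)%:E) (E (sg n)%:E)) (ext_inf (T +oo%E) (E +oo%E)))
  (* (A4) *)
  (Hh0 : 0 < h0)
  (A4W : forall s : \bar R, (0 < s)%E -> forall h, 0 < h <= h0 ->
     fin_dim_subspace (W s h) /\ W s h `<=` T s)
  (A4span : forall h, 0 < h <= h0 -> exists bs : seq V,
     forall s : \bar R, (0 < s)%E -> W s h `<=` span_seq bs)
  (A4i : forall s : \bar R, (0 < s)%E -> forall u, T s u ->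
     exists (hs : nat -> R) (us : nat -> V),
       [/\ (forall n, 0 < hs n <= h0), hs @ \oo --> (0 : R),
           (forall n, W s (hs n) (us n)) & ncvg (N s) us u])
  (A4ii : forall h, 0 < h <= h0 ->
     W +oo%E h = T +oo%E `&` [set v | exists2 s : \bar R, (0 < s)%E & W s h v])
  (A4iii : forall (h : R) (v : V), 0 <= h <= h0 ->
     (if h == 0 then T +oo%E v else W +oo%E h v) ->
     forall (sg hs : nat -> R), (forall n, 0 < sg n) -> sg @ \oo --> +oo ->
     (forall n, 0 < hs n <= h0) ->
     (if h == 0 then hs @ \oo --> (0 : R) else forall n, hs n = h) ->
     exists (vs vn : nat -> V),
       [/\ (forall n, T (sg n)%:E (vs n)), ncvg (N 0%E) vs v,
           (fun n => E (sg n)%:E (vs n)) @ \oo --> E +oo%E v,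
           (forall n, W (sg n)%:E (hs n) (vn n))
         & (fun n => N (sg n)%:E (vn n - vs n)) @ \oo --> (0 : R)])
  (s : \bar R) (Hs : (0 < s)%E) :
  (* Gamma-convergence as h -> 0 of E_{s,h} (on T_s) to Ebar_s, strong topology of T_s *)
  (forall hs : nat -> R, (forall n, 0 < hs n <= h0) -> hs @ \oo --> (0 : R) ->
     Gamma_liminf (T s) (N s) (fun n => ext_inf (W s (hs n)) (E s)) (ext_inf (T s) (E s)))
  /\
  (forall v, T s v -> exists hs : nat -> R,
     [/\ (forall n, 0 < hs n <= h0), hs @ \oo --> (0 : R) &
       Gamma_recovery (T s) (N s) (fun n => ext_inf (W s (hs n)) (E s))
         (ext_inf (T s) (E s)) v]).
Proof.
have [SN _ _] := HT s (ltW Hs).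
have [phi [phi_cont lip]] := A2i s Hs.
have Econt := local_lipschitz_ncontinuous SN phi_cont lip.
split=> [hs _ _|v Tv]; first exact: ncontinuous_Gamma_liminf.
have [hs [us [hs_bd hs0 Wus usv]]] := A4i s Hs v Tv.
exists hs; split=> //; apply: (ncontinuous_Gamma_recovery Econt Wus) => // n.
exact: (A4W s Hs (hs n) (hs_bd n)).2 _ (Wus n).
Qed.
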